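(* In the 3-body problem in ${\bf S}^2$ with equal masses $m_1=m_2=m_3=m$, for every $m>0$ and every $z\in(-1/2,0)\cup(0,1)$ there exist $\omega>0$ and $\omega<0$ such that ${\bf q}_1(t)=(0,0,1)$, ${\bf q}_2(t)=(r\cos\omega t, r\sin\omega t, z)$, ${\bf q}_3(t)=(-r\cos\omega t,-r\sin\omega t,z)$, with $r=(1-z^2)^{1/2}$, is a solution of the equations of motion (an elliptic relative equilibrium); the condition on $\omega$ is $\frac{4z+|z|^{-1}}{4z^2(1-z^2)^{3/2}}=\frac{\omega^2}{m}$.
   Context: The $n$-body problem in ${\bf S}^2$: bodies of masses $m_1,\dots,m_n>0$ have positions ${\bf q}_i=(x_i,y_i,z_i)\in\mathbb R^3$ on the unit sphere ${\bf S}^2=\{{\bf q}:{\bf q}\cdot{\bf q}=1\}$ ($\cdot$ the Euclidean inner product), and satisfy $$\ddot{\bf q}_i=\sum_{j\ne i}\frac{m_j[{\bf q}_j-({\bf q}_i\cdot{\bf q}_j){\bf q}_i]}{[1-({\bf q}_i\cdot{\bf q}_j)^2]^{3/2}}-(\dot{\bf q}_i\cdot\dot{\bf q}_i){\bf q}_i,\qquad {\bf q}_i\cdot{\bf q}_i=1,\ \ {\bf q}_i\cdot\dot{\bf q}_i=0,$$ $i=1,\dots,n$, defined only for configurations with $({\bf q}_i\cdot{\bf q}_j)^2\ne 1$ for all $i\ne j$. *)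

From Stdlib Require Import Reals Lra.
Open Scope R_scope.

Definition vec3 : Type := (R * R * R)%type.
Definition mk3 (a b c : R) : vec3 := (a, b, c).
Definition vx (u : vec3) : R := fst (fst u).
Definition vy (u : vec3) : R := snd (fst u).
Definition vz (u : vec3) : R := snd u.
Definition dot (u w : vec3) : R := vx u * vx w + vy u * vy w + vz u * vz w.
Definition vadd (u w : vec3) : vec3 := mk3 (vx u + vx w) (vy u + vy w) (vz u + vz w).
Definition vscale (c : R) (u : vec3) : vec3 := mk3 (c * vx u) (c * vy u) (c * vz u).
Definition vsub (u w : vec3) : vec3 := vadd u (vscale (-1) w).
Definition vzero : vec3 := mk3 0 0 0.

Fixpoint vsum (k : nat) (f : nat -> vec3) : vec3 :=
  match k with
  | O => vzero
  | S k' => vadd (vsum k' f) (f k')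
  end.

Definition has_deriv3 (f g : R -> vec3) : Prop :=
  forall t : R,
    derivable_pt_lim (fun s => vx (f s)) t (vx (g t)) /\
    derivable_pt_lim (fun s => vy (f s)) t (vy (g t)) /\
    derivable_pt_lim (fun s => vz (f s)) t (vz (g t)).

(* Right-hand side of the equations of motion of the n-body problem in S^2,
   bodies indexed 0..n-1, masses m, positions qs and velocities vs at a time. *)
Definition accel (n : nat) (m : nat -> R) (qs vs : nat -> vec3) (i : nat) : vec3 :=
  vadd
    (vsum n (fun j =>
       if Nat.eq_dec j i then vzero
       else vscale (m j / Rpower (1 - (dot (qs i) (qs j)) ^ 2) (3 / 2))
                   (vsub (qs j) (vscale (dot (qs i) (qs j)) (qs i)))))
    (vscale (- dot (vs i) (vs i)) (qs i)).

Definition curved_nbody_solution (n : nat) (m : nat -> R) (q : nat -> R -> vec3) : Prop :=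
  exists v a : nat -> R -> vec3,
    forall i : nat, (i < n)%nat ->
      has_deriv3 (q i) (v i) /\
      has_deriv3 (v i) (a i) /\
      forall t : R,
        dot (q i t) (q i t) = 1 /\
        dot (q i t) (v i t) = 0 /\
        (forall j : nat, (j < n)%nat -> j <> i -> (dot (q i t) (q j t)) ^ 2 <> 1) /\
        a i t = accel n m (fun j => q j t) (fun j => v j t) i.

(* The three-body configuration of the theorem (bodies 1,2,3 are indices 0,1,2) *)
Definition ere_config (z omega : R) (i : nat) (t : R) : vec3 :=
  let r := sqrt (1 - z ^ 2) in
  match i with
  | O => mk3 0 0 1
  | S O => mk3 (r * cos (omega * t)) (r * sin (omega * t)) z
  | _ => mk3 (- (r * cos (omega * t))) (- (r * sin (omega * t))) z
  end.

(* In the configuration of the theorem every body moves uniformly on a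
   horizontal circle, all with the same angular velocity omega.  For such a
   rigid rotation the mutual inner products q_i . q_j are constant, so the
   gravitational term of the equations of motion splits into a horizontal
   part that rotates with the bodies and a constant vertical part, while the
   actual acceleration is the centripetal one, -omega^2 times the horizontal
   position.  The equations of motion thus reduce to time-independent scalar
   balance conditions, two per body. *)

From Stdlib Require Import Reals Lra Lia Psatz FunctionalExtensionality.
Open Scope R_scope.

Fixpoint rsum (k : nat) (f : nat -> R) : R :=
  match k with
  | O => 0
  | S k' => rsum k' f + f k'
  end.

Lemma vec3_eq (u w : vec3) : vx u = vx w -> vy u = vy w -> vz u = vz w -> u = w.
Proof. destruct u as [[x y] z], w as [[x' y'] z']; cbn; intros -> -> ->; reflexivity. Qed.

Lemma vx_vsum (k : nat) (f : nat -> vec3) : vx (vsum k f) = rsum k (fun j => vx (f j)).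
Proof. induction k as [|k IH]; cbn; [reflexivity | rewrite <- IH; reflexivity]. Qed.

Lemma vy_vsum (k : nat) (f : nat -> vec3) : vy (vsum k f) = rsum k (fun j => vy (f j)).
Proof. induction k as [|k IH]; cbn; [reflexivity | rewrite <- IH; reflexivity]. Qed.

Lemma vz_vsum (k : nat) (f : nat -> vec3) : vz (vsum k f) = rsum k (fun j => vz (f j)).
Proof. induction k as [|k IH]; cbn; [reflexivity | rewrite <- IH; reflexivity]. Qed.

Lemma rsum_ext (k : nat) (f g : nat -> R) : (forall j, f j = g j) -> rsum k f = rsum k g.
Proof. intro Hfg; induction k as [|k IH]; cbn; [reflexivity | rewrite IH, Hfg; reflexivity]. Qed.

Lemma rsum_mult_r (k : nat) (f : nat -> R) (c : R) :
  rsum k (fun j => f j * c) = rsum k f * c.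
Proof. induction k as [|k IH]; cbn; [ring | rewrite IH; ring]. Qed.

Definition circle (a c w t : R) : vec3 := mk3 (a * cos (w * t)) (a * sin (w * t)) c.
Definition circle_vel (a w t : R) : vec3 := mk3 (- (a * w) * sin (w * t)) (a * w * cos (w * t)) 0.

Lemma deriv_linear (w t : R) : derivable_pt_lim (fun s => w * s) t w.
Proof.
  pose proof (derivable_pt_lim_scal id w t 1 (derivable_pt_lim_id t)) as H.
  rewrite Rmult_1_r in H; exact H.
Qed.

Lemma deriv_scaled_cos (k w t : R) :
  derivable_pt_lim (fun s => k * cos (w * s)) t (- (k * w) * sin (w * t)).
Proof.
  replace (- (k * w) * sin (w * t)) with (k * (- sin (w * t) * w)) by ring.
  apply derivable_pt_lim_scal, (derivable_pt_lim_comp (fun s => w * s) cos).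
  - apply deriv_linear.
  - apply derivable_pt_lim_cos.
Qed.

Lemma deriv_scaled_sin (k w t : R) :
  derivable_pt_lim (fun s => k * sin (w * s)) t (k * w * cos (w * t)).
Proof.
  replace (k * w * cos (w * t)) with (k * (cos (w * t) * w)) by ring.
  apply derivable_pt_lim_scal, (derivable_pt_lim_comp (fun s => w * s) sin).
  - apply deriv_linear.
  - apply derivable_pt_lim_sin.
Qed.

Lemma circle_has_deriv (a c w : R) : has_deriv3 (circle a c w) (circle_vel a w).
Proof.
  intro t; cbn; split; [|split].
  - apply deriv_scaled_cos.
  - apply deriv_scaled_sin.
  - apply derivable_pt_lim_const.
Qed.

Lemma circle_vel_has_deriv (a w : R) :
  has_deriv3 (circle_vel a w) (circle (- (a * w * w)) 0 w).
Proof.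
  intro t; cbn; split; [|split].
  - replace (- (a * w * w) * cos (w * t)) with (- (a * w) * w * cos (w * t)) by ring.
    apply deriv_scaled_sin.
  - apply deriv_scaled_cos.
  - apply derivable_pt_lim_const.
Qed.

Lemma dot_circle (a c b d w t : R) :
  dot (circle a c w t) (circle b d w t) = a * b + c * d.
Proof.
  unfold dot, circle, mk3, vx, vy, vz; cbn.
  pose proof (sin2_cos2 (w * t)) as Hsc; unfold Rsqr in Hsc.
  transitivity (a * b * (sin (w * t) * sin (w * t) + cos (w * t) * cos (w * t)) + c * d);
    [ring | rewrite Hsc; ring].
Qed.

Lemma dot_circle_vel (a c w t : R) : dot (circle a c w t) (circle_vel a w t) = 0.
Proof. unfold dot, circle, circle_vel, mk3, vx, vy, vz; cbn; ring. Qed.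

Lemma dot_vel_vel (a w t : R) : dot (circle_vel a w t) (circle_vel a w t) = (a * w) ^ 2.
Proof.
  unfold dot, circle_vel, mk3, vx, vy, vz; cbn.
  pose proof (sin2_cos2 (w * t)) as Hsc; unfold Rsqr in Hsc.
  transitivity ((a * w) * (a * w) * (sin (w * t) * sin (w * t) + cos (w * t) * cos (w * t)));
    [ring | rewrite Hsc; ring].
Qed.

Section RigidRotation.
Variables (n : nat) (m a h : nat -> R) (w : R).

Definition cos_angle (i j : nat) : R := a i * a j + h i * h j.

Definition coef (i j : nat) : R := m j / Rpower (1 - cos_angle i j ^ 2) (3 / 2).

Definition radial_term (i j : nat) : R :=
  if Nat.eq_dec j i then 0 else coef i j * (a j - cos_angle i j * a i).

Definition vertical_term (i j : nat) : R :=
  if Nat.eq_dec j i then 0 else coef i j * (h j - cos_angle i j * h i).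

Definition radial_force (i : nat) : R := rsum n (radial_term i).

Definition vertical_force (i : nat) : R := rsum n (vertical_term i).

Definition rotating (i : nat) (t : R) : vec3 := circle (a i) (h i) w t.

Lemma attraction_rotating (i j : nat) (t : R) :
  (if Nat.eq_dec j i then vzero
   else vscale (m j / Rpower (1 - dot (rotating i t) (rotating j t) ^ 2) (3 / 2))
               (vsub (rotating j t) (vscale (dot (rotating i t) (rotating j t)) (rotating i t))))
  = mk3 (radial_term i j * cos (w * t)) (radial_term i j * sin (w * t)) (vertical_term i j).
Proof.
  unfold radial_term, vertical_term, rotating; rewrite dot_circle.
  destruct (Nat.eq_dec j i); unfold vzero, vsub, vadd, vscale, circle, coef, cos_angle;
    cbn [vx vy vz mk3 fst snd]; f_equal; ring.
Qed.

Lemma accel_rotating (i : nat) (t : R) :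
  accel n m (fun j => rotating j t) (fun j => circle_vel (a j) w t) i =
  mk3 ((radial_force i - (a i * w) ^ 2 * a i) * cos (w * t))
      ((radial_force i - (a i * w) ^ 2 * a i) * sin (w * t))
      (vertical_force i - (a i * w) ^ 2 * h i).
Proof.
  unfold accel; rewrite dot_vel_vel.
  apply vec3_eq; cbn [vadd vscale mk3 vx vy vz fst snd];
    rewrite ?vx_vsum, ?vy_vsum, ?vz_vsum; unfold radial_force, vertical_force.
  - rewrite (rsum_ext n _ (fun j => radial_term i j * cos (w * t)))
      by (intro j; rewrite attraction_rotating; reflexivity).
    rewrite rsum_mult_r; cbn [rotating circle mk3 vx fst snd]; ring.
  - rewrite (rsum_ext n _ (fun j => radial_term i j * sin (w * t)))
      by (intro j; rewrite attraction_rotating; reflexivity).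
    rewrite rsum_mult_r; cbn [rotating circle mk3 vy fst snd]; ring.
  - rewrite (rsum_ext n _ (vertical_term i))
      by (intro j; rewrite attraction_rotating; reflexivity).
    cbn [rotating circle mk3 vz snd]; ring.
Qed.

(* A rigid rotation of bodies on the unit sphere, never antipodal or
   coincident, solves the equations of motion as soon as, for every body, the
   radial and vertical attractions supply exactly the acceleration needed to
   keep it on its circle. *)
Theorem rigid_rotation_solution :
  (forall i, (i < n)%nat -> a i ^ 2 + h i ^ 2 = 1) ->
  (forall i j, (i < n)%nat -> (j < n)%nat -> j <> i -> cos_angle i j ^ 2 <> 1) ->
  (forall i, (i < n)%nat ->
     radial_force i = - a i * h i ^ 2 * w ^ 2 /\
     vertical_force i = a i ^ 2 * h i * w ^ 2) ->
  curved_nbody_solution n m rotating.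
Proof.
  intros Hsphere Hsep Hbalance.
  exists (fun i => circle_vel (a i) w), (fun i => circle (- (a i * w * w)) 0 w).
  intros i Hi; split; [apply circle_has_deriv | split; [apply circle_vel_has_deriv |]].
  intro t; split; [| split; [| split]].
  - unfold rotating; rewrite dot_circle, <- (Hsphere i Hi); ring.
  - apply dot_circle_vel.
  - intros j Hj Hji; unfold rotating; rewrite dot_circle; exact (Hsep i j Hi Hj Hji).
  - rewrite accel_rotating.
    destruct (Hbalance i Hi) as [Hrad Hvert]; rewrite Hrad, Hvert.
    assert (Hcentripetal : - a i * h i ^ 2 * w ^ 2 - (a i * w) ^ 2 * a i = - (a i * w * w)).
    { replace (h i ^ 2) with (1 - a i ^ 2) by (pose proof (Hsphere i Hi); lra); ring. }
    rewrite Hcentripetal; unfold circle, mk3; f_equal; ring.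
Qed.

End RigidRotation.

Definition ere_radius (r : R) (i : nat) : R :=
  match i with O => 0 | S O => r | _ => - r end.

Definition ere_height (z : R) (i : nat) : R :=
  match i with O => 1 | _ => z end.

Lemma ere_config_rotating (z w : R) :
  ere_config z w = rotating (ere_radius (sqrt (1 - z ^ 2))) (ere_height z) w.
Proof.
  apply functional_extensionality; intro i; apply functional_extensionality; intro t.
  unfold ere_config, rotating, circle, mk3.
  destruct i as [|[|i]]; cbn [ere_radius ere_height]; f_equal; try f_equal; ring.
Qed.

Lemma Rpower_three_halves (x : R) : 0 < x -> Rpower x (3 / 2) = x * sqrt x.
Proof.
  intro Hx; replace (3 / 2) with (1 + / 2) by field.
  rewrite Rpower_plus, Rpower_1, Rpower_sqrt; [reflexivity | exact Hx | exact Hx].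
Qed.

Section ThreeBody.
Variables (m z : R).
Hypotheses (Hz0 : z <> 0) (Hz1 : z ^ 2 < 1).

Let a := ere_radius (sqrt (1 - z ^ 2)).
Let h := ere_height z.

Lemma radius_sq : sqrt (1 - z ^ 2) ^ 2 = 1 - z ^ 2.
Proof. apply pow2_sqrt; lra. Qed.

Lemma cos_angle_pole (j : nat) : (0 < j)%nat -> cos_angle a h 0 j = z /\ cos_angle a h j 0 = z.
Proof. destruct j as [|j]; [lia |]; intros _; unfold cos_angle, a, h; cbn; split; ring. Qed.

Lemma cos_angle_pair : cos_angle a h 1 2 = 2 * z ^ 2 - 1 /\ cos_angle a h 2 1 = 2 * z ^ 2 - 1.
Proof.
  pose proof radius_sq as Hr.
  unfold cos_angle, a, h; cbn [ere_radius ere_height]; split; nra.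
Qed.

Lemma three_body_on_sphere (i : nat) : (i < 3)%nat -> a i ^ 2 + h i ^ 2 = 1.
Proof.
  pose proof radius_sq as Hr.
  intro Hi; unfold a, h; destruct i as [|[|[|i]]]; [| | | lia]; cbn [ere_radius ere_height];
    [ring | lra | replace ((- sqrt (1 - z ^ 2)) ^ 2) with (sqrt (1 - z ^ 2) ^ 2) by ring; lra].
Qed.

Lemma three_body_no_collision (i j : nat) :
  (i < 3)%nat -> (j < 3)%nat -> j <> i -> cos_angle a h i j ^ 2 <> 1.
Proof.
  intros Hi Hj Hji.
  destruct (cos_angle_pole 1) as [S01 S10]; [lia |].
  destruct (cos_angle_pole 2) as [S02 S20]; [lia |].
  destruct cos_angle_pair as [S12 S21].
  assert (Hz2 : 0 < z * z) by (apply Rsqr_pos_lt; exact Hz0).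
  destruct i as [|[|[|i]]], j as [|[|[|j]]]; try lia;
    rewrite ?S01, ?S10, ?S02, ?S20, ?S12, ?S21; nra.
Qed.

Definition pole_pull : R := m / Rpower (1 - z ^ 2) (3 / 2).
Definition pair_pull : R := m / Rpower (1 - (2 * z ^ 2 - 1) ^ 2) (3 / 2).

(* The two bodies on the circle are at chordal distance 2 |z| r, so their
   attraction is weaker by the factor 8 |z|^3 than the pole's. *)
Lemma pair_pull_pole_pull : pair_pull = pole_pull / (8 * Rabs z ^ 3).
Proof.
  assert (Hz2 : 0 < z * z) by (apply Rsqr_pos_lt; exact Hz0).
  assert (Hbase : 0 < 1 - z ^ 2) by lra.
  assert (Habs : 0 < Rabs z) by (apply Rabs_pos_lt; exact Hz0).
  assert (Hchord : Rpower (1 - (2 * z ^ 2 - 1) ^ 2) (3 / 2)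
                   = 8 * Rabs z ^ 3 * Rpower (1 - z ^ 2) (3 / 2)).
  { replace (1 - (2 * z ^ 2 - 1) ^ 2) with (Rsqr (2 * z) * (1 - z ^ 2)) by (unfold Rsqr; ring).
    rewrite <- Rpower_mult_distr by (try apply Rsqr_pos_lt; lra).
    rewrite (Rpower_three_halves (Rsqr (2 * z))) by (apply Rsqr_pos_lt; lra).
    rewrite sqrt_Rsqr_abs, Rabs_mult, (Rabs_pos_eq 2) by lra.
    unfold Rsqr; replace (2 * z * (2 * z)) with (4 * z ^ 2) by ring.
    rewrite <- (pow2_abs z); ring. }
  unfold pair_pull, pole_pull; rewrite Hchord.
  field; split; [apply Rgt_not_eq, exp_pos | lra].
Qed.

Lemma frequency_balance (w : R) :
  0 < m ->
  (4 * z + / Rabs z) / (4 * z ^ 2 * Rpower (1 - z ^ 2) (3 / 2)) = w ^ 2 / m ->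
  pole_pull + 2 * z * pair_pull = z * w ^ 2.
Proof.
  intros Hm Hfreq.
  assert (Habs : 0 < Rabs z) by (apply Rabs_pos_lt; exact Hz0).
  assert (HP : 0 < Rpower (1 - z ^ 2) (3 / 2)) by apply exp_pos.
  assert (Hw : w ^ 2 = m * ((4 * z + / Rabs z) / (4 * z ^ 2 * Rpower (1 - z ^ 2) (3 / 2)))).
  { rewrite Hfreq; field; lra. }
  rewrite pair_pull_pole_pull, Hw; unfold pole_pull.
  field_simplify_eq; [rewrite <- (pow2_abs z); ring | split; lra].
Qed.

Lemma three_body_balance (w : R) :
  pole_pull + 2 * z * pair_pull = z * w ^ 2 ->
  forall i, (i < 3)%nat ->
    radial_force 3 (fun _ => m) a h i = - a i * h i ^ 2 * w ^ 2 /\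
    vertical_force 3 (fun _ => m) a h i = a i ^ 2 * h i * w ^ 2.
Proof.
  intros Hkey i Hi.
  assert (Hpole : pole_pull = z * w ^ 2 - 2 * z * pair_pull) by lra.
  pose proof radius_sq as Hr.
  destruct (cos_angle_pole 1) as [S01 S10]; [lia |].
  destruct (cos_angle_pole 2) as [S02 S20]; [lia |].
  destruct cos_angle_pair as [S12 S21].
  unfold radial_force, vertical_force, radial_term, vertical_term, coef.
  destruct i as [|[|[|i]]]; [| | | lia]; cbn -[cos_angle Rpower pow];
    rewrite ?S01, ?S10, ?S02, ?S20, ?S12, ?S21; fold pole_pull pair_pull;
    unfold a, h; cbn [ere_radius ere_height];
    set (r := sqrt (1 - z ^ 2)) in *;
    try replace ((- r) ^ 2) with (r ^ 2) by ring;
    rewrite ?Hr, Hpole; split; ring.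
Qed.

Lemma three_body_solution (w : R) :
  0 < m ->
  (4 * z + / Rabs z) / (4 * z ^ 2 * Rpower (1 - z ^ 2) (3 / 2)) = w ^ 2 / m ->
  curved_nbody_solution 3 (fun _ => m) (ere_config z w).
Proof.
  intros Hm Hfreq; rewrite ere_config_rotating.
  apply rigid_rotation_solution.
  - exact three_body_on_sphere.
  - exact three_body_no_collision.
  - apply three_body_balance, frequency_balance; assumption.
Qed.

End ThreeBody.

Lemma frequency_numerator_pos (z : R) :
  (-1/2 < z /\ z < 0) \/ (0 < z /\ z < 1) -> 0 < 4 * z + / Rabs z.
Proof.
  intros [[Hlo Hhi] | [Hlo Hhi]].
  - rewrite Rabs_left by exact Hhi.
    assert (Hinv : / (1 / 2) < / - z) by (apply Rinv_lt_contravar; nra).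
    replace (/ (1 / 2)) with 2 in Hinv by field; lra.
  - rewrite Rabs_pos_eq by lra.
    assert (0 < / z) by (apply Rinv_0_lt_compat; exact Hlo); lra.
Qed.

Theorem mainTheorem11 :
  forall (m z : R), 0 < m ->
    ((-1/2 < z /\ z < 0) \/ (0 < z /\ z < 1)) ->
    (exists omega : R, 0 < omega /\
       (4 * z + / Rabs z) / (4 * z ^ 2 * Rpower (1 - z ^ 2) (3 / 2)) = omega ^ 2 / m /\
       curved_nbody_solution 3 (fun _ => m) (ere_config z omega)) /\
    (exists omega : R, omega < 0 /\
       (4 * z + / Rabs z) / (4 * z ^ 2 * Rpower (1 - z ^ 2) (3 / 2)) = omega ^ 2 / m /\
       curved_nbody_solution 3 (fun _ => m) (ere_config z omega)).
Proof.
  intros m z Hm Hz.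
  assert (Hz0 : z <> 0) by lra.
  assert (Hz1 : z ^ 2 < 1) by (destruct Hz; nra).
  set (freq := (4 * z + / Rabs z) / (4 * z ^ 2 * Rpower (1 - z ^ 2) (3 / 2))).
  assert (Hfreq : 0 < m * freq).
  { apply Rmult_lt_0_compat; [exact Hm |].
    apply Rdiv_lt_0_compat; [exact (frequency_numerator_pos z Hz) |].
    apply Rmult_lt_0_compat; [apply Rmult_lt_0_compat; nra | apply exp_pos]. }
  assert (Hsolution : forall omega, omega ^ 2 = m * freq ->
            freq = omega ^ 2 / m /\ curved_nbody_solution 3 (fun _ => m) (ere_config z omega)).
  { intros omega Homega.
    assert (Hrel : freq = omega ^ 2 / m) by (rewrite Homega; field; lra).
    split; [exact Hrel | apply three_body_solution; assumption]. }
  assert (Hsq : sqrt (m * freq) ^ 2 = m * freq) by (apply pow2_sqrt; lra).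
  assert (Hpos : 0 < sqrt (m * freq)) by (apply sqrt_lt_R0; exact Hfreq).
  split.
  - exists (sqrt (m * freq)); split; [exact Hpos | apply Hsolution, Hsq].
  - exists (- sqrt (m * freq)); split; [lra | apply Hsolution].
    replace ((- sqrt (m * freq)) ^ 2) with (sqrt (m * freq) ^ 2) by ring; exact Hsq.
Qed.
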